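(* Assume each $f_i$ has degree $d_i\ge1$. Suppose $\lambda>0$ and $v=(v_1,\ldots,v_n,v_{n+1})\in K_1^\circ$ satisfy $\lambda v_{n+1}=-1$ (i.e., $\Delta\tilde y=\lambda[v]_1$ satisfies $\langle x_{n+1},\Delta\tilde y\rangle=-1$ and $\Delta\tilde y\in\mathscr R_1(K_1^\circ)$). If the point $(0,v)$ lies in the closure of $\widetilde K_1\cap\{x_0>0\}$, then the problem $\min x_{n+1}$ over $K_1$ and the problem $\min_{x\in K}\max_i f_i(x)$ are both unbounded below, and hence there are no weakly Pareto points.
   Context: $f_1,\ldots,f_m,c_i$ ($i\in\mathcal E\cup\mathcal I$) are real polynomials in $x\in\mathbb R^n$, $K=\{x: c_i(x)=0\ (i\in\mathcal E),\ c_j(x)\ge0\ (j\in\mathcal I)\}$, $d_i=\deg f_i$. For a polynomial $p$ of degree $e$ in $x$, $\tilde p(x_0,x)=x_0^ep(x/x_0)$ and $p^{hom}(x)=\tilde p(0,x)$; $\tilde x=(x_0,x)$. Define $K_1=\{(x,x_{n+1})\in\mathbb R^{n+1}: -(-x_{n+1})^{d_i}-f_i(x)\ge0\ (i\in[m]),\ x\in K\}$, $\widetilde K_1=\{(x_0,x,x_{n+1}): -(-x_{n+1})^{d_i}-\tilde f_i(\tilde x)\ge0\ (i\in[m]),\ \tilde c_i(\tilde x)=0\ (i\in\mathcal E),\ \tilde c_j(\tilde x)\ge0\ (j\in\mathcal I),\ \|\tilde x\|^2+x_{n+1}^2=1,\ x_0\ge0\}$, and $K_1^\circ=\{(x,x_{n+1}):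 -(-x_{n+1})^{d_i}-f_i^{hom}(x)\ge0\ (i\in[m]),\ c_i^{hom}(x)=0\ (i\in\mathcal E),\ c_j^{hom}(x)\ge0\ (j\in\mathcal I),\ \|x\|^2+x_{n+1}^2=1\}$. $[v]_1=(1,v)$, $\mathscr R_1(T)$ is the set of degree-1 moment vectors of Borel measures supported in $T$. A point $x^*\in K$ is weakly Pareto if no $x\in K$ has $f_i(x)<f_i(x^* )$ for all $i$. *)

From HB Require Import structures.
From mathcomp Require Import all_boot all_order all_algebra.
From mathcomp Require Import reals.
From mathcomp Require Import mpoly.
Import Order.TTheory GRing.Theory Num.Theory.

Set Implicit Arguments.
Unset Strict Implicit.
Unset Printing Implicit Defensive.

Local Open Scope ring_scope.

Section PolyOpt.
Variables (R : realType) (n : nat).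

(* total degree of p (degree of 0 is 0 by convention) *)
Definition pdeg (p : {mpoly R[n]}) : nat := (msize p).-1.

(* p^hom : the homogeneous part of p of top degree, p^hom(x) = ~p(0,x) *)
Definition phom (p : {mpoly R[n]}) : {mpoly R[n]} :=
  \sum_(m <- msupp p | mdeg m == pdeg p) p@_m *: 'X_[m].

(* ~p(x0,x) = x0^e p(x/x0), e = deg p; variable 0 is x0, variable lift 0 i is x_i *)
Definition ptilde (p : {mpoly R[n]}) : {mpoly R[n.+1]} :=
  \sum_(m <- msupp p) p@_m *:
     ('X_ord0 ^+ (pdeg p - mdeg m) * \prod_(i < n) 'X_(lift ord0 i) ^+ m i).

Definition ext (x0 : R) (x : 'I_n -> R) : 'I_n.+1 -> R :=
  fun j => match unlift ord0 j with Some i => x i | None => x0 end.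

Definition sqnorm (x : 'I_n -> R) : R := \sum_(i < n) x i ^+ 2.

Variables (m pe pi : nat) (f : 'I_m -> {mpoly R[n]})
  (ce : 'I_pe -> {mpoly R[n]}) (ci : 'I_pi -> {mpoly R[n]}).

Definition inK (x : 'I_n -> R) : Prop :=
  (forall i, (ce i).@[x] = 0) /\ (forall j, 0 <= (ci j).@[x]).

(* K_1 in R^{n+1}, points (x, x_{n+1}) *)
Definition inK1 (x : 'I_n -> R) (t : R) : Prop :=
  (forall i, 0 <= - (- t) ^+ pdeg (f i) - (f i).@[x]) /\ inK x.

(* ~K_1 in R^{n+2}, points (x0, x, x_{n+1}) *)
Definition inK1tilde (x0 : R) (x : 'I_n -> R) (t : R) : Prop :=
  [/\ forall i, 0 <= - (- t) ^+ pdeg (f i) - (ptilde (f i)).@[ext x0 x],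
      forall i, (ptilde (ce i)).@[ext x0 x] = 0,
      forall j, 0 <= (ptilde (ci j)).@[ext x0 x],
      x0 ^+ 2 + sqnorm x + t ^+ 2 = 1
    & 0 <= x0].

Definition inK1circ (x : 'I_n -> R) (t : R) : Prop :=
  [/\ forall i, 0 <= - (- t) ^+ pdeg (f i) - (phom (f i)).@[x],
      forall i, (phom (ce i)).@[x] = 0,
      forall j, 0 <= (phom (ci j)).@[x]
    & sqnorm x + t ^+ 2 = 1].

Definition in_closure_K1tilde_pos (x0 : R) (x : 'I_n -> R) (t : R) : Prop :=
  forall e : R, 0 < e -> exists y0 (y : 'I_n -> R) s,
    [/\ inK1tilde y0 y s, 0 < y0 &
        (y0 - x0) ^+ 2 + sqnorm (fun i => y i - x i) + (s - t) ^+ 2 < e].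

Definition weakly_pareto (xs : 'I_n -> R) : Prop :=
  inK xs /\ ~ (exists x, inK x /\ forall i, (f i).@[x] < (f i).@[xs]).

End PolyOpt.

From HB Require Import structures.
From mathcomp Require Import all_boot all_order all_algebra.
From mathcomp Require Import reals.
From mathcomp Require Import mpoly.
From mathcomp Require Import ring lra.
Import Order.TTheory GRing.Theory Num.Theory.
Local Open Scope ring_scope.

(* Dehomogenization: for x0 > 0 the point (x0, x, x_{n+1}) lies
   in ~K_1 exactly when (x/x0, x_{n+1}/x0) satisfies the constraints of K_1,
   because ~p(x0, x) = x0^(deg p) p(x/x0) and x0^d > 0.  Since lam > 0 and
   lam v_{n+1} = -1 we have v_{n+1} < 0.  As (0, v) is a limit of points
   (y0, y, s) of ~K_1 with y0 > 0, we may pick such points with y0 arbitrarily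
   small and s < v_{n+1}/2 < 0; their images in K_1 have last coordinate
   s/y0, which is therefore unbounded below.  On K_1 with x_{n+1} <= -1 and
   deg f_i >= 1 we get f_i(x) <= -(-x_{n+1})^(d_i) <= x_{n+1}, so
   max_i f_i is unbounded below on K as well, and then no point of K can be
   weakly Pareto: some x in K beats it in every objective. *)

Lemma ptildeE (R : realType) n (p : {mpoly R[n]}) y0 (y : 'I_n -> R) :
  y0 != 0 ->
  (ptilde p).@[ext y0 y] = y0 ^+ pdeg p * p.@[fun i => y i / y0].
Proof.
move=> hy0.
rewrite /ptilde raddf_sum /= (mevalE _ p) mulr_sumr.
apply: eq_big_seq => mm hm.
rewrite mevalZ mevalM rmorph_prod /= rmorphXn /= mevalXU.
under eq_bigr do rewrite rmorphXn /= mevalXU.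
have ext0 : ext y0 y ord0 = y0 by rewrite /ext unlift_none.
have extS i : ext y0 y (lift ord0 i) = y i by rewrite /ext liftK.
rewrite ext0; under eq_bigr do rewrite extS.
under [in RHS]eq_bigr do rewrite exprMn.
rewrite big_split /= prodrXr -mdegE.
have deg_le : (mdeg mm <= pdeg p)%N.
  by have := msize_mdeg_lt hm; rewrite /pdeg; case: (msize p).
rewrite -{2}(subnK deg_le) exprD exprVn.
have hD : y0 ^+ mdeg mm != 0 by rewrite expf_neq0.
move: (y0 ^+ (pdeg p - mdeg mm)) (y0 ^+ mdeg mm) hD
      (\prod_(i < n) y i ^+ mm i) (p@_mm) => A D hD P c.
rewrite mulrCA -mulrA; congr (A * _).
by rewrite mulrCA [D * _]mulrCA divff // mulr1.
Qed.

Lemma sqnorm_ge0 {R : realType} {n} (x : 'I_n -> R) : 0 <= sqnorm x.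
Proof. by apply: sumr_ge0 => i _; rewrite sqr_ge0. Qed.

Lemma min_le_l {R : realDomainType} (a b : R) : Num.min a b <= a.
Proof. by rewrite ge_min lexx. Qed.

Lemma min_le_r {R : realDomainType} (a b : R) : Num.min a b <= b.
Proof. by rewrite ge_min lexx orbT. Qed.

Lemma lt_of_sqr_lt {R : realDomainType} (a b : R) :
  0 <= b -> a ^+ 2 < b ^+ 2 -> a < b.
Proof.
move=> b_ge0; apply: contraTT; rewrite -!leNgt => le_ba.
by rewrite lerXn2r // nnegrE (le_trans b_ge0).
Qed.

Section Unboundedness.
Context {R : realType} {n m pe pi : nat} {f : 'I_m -> {mpoly R[n]}}
  {ce : 'I_pe -> {mpoly R[n]}} {ci : 'I_pi -> {mpoly R[n]}}.

Lemma K1tilde_to_K1 (y0 : R) (y : 'I_n -> R) (s : R) :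
  0 < y0 -> inK1tilde f ce ci y0 y s ->
  inK1 f ce ci (fun i => y i / y0) (s / y0).
Proof.
move=> y0_gt0 [hf hce hci _ _].
have y0_neq0 : y0 != 0 by rewrite gt_eqF.
split; [|split].
- move=> i; have := hf i; rewrite ptildeE //.
  move: (pdeg (f i)) (f i).@[_] => d F.
  have y0d_gt0 : 0 < y0 ^+ d by rewrite exprn_gt0.
  have -> : - (- s) ^+ d - y0 ^+ d * F = (- (- (s / y0)) ^+ d - F) * y0 ^+ d.
    rewrite -[- (s / y0)]mulNr exprMn exprVn mulrBl mulNr -mulrA.
    by rewrite mulVf ?gt_eqF // mulr1 [F * _]mulrC.
  by rewrite pmulr_lge0.
- move=> i; have := hce i; rewrite ptildeE // => /eqP.
  by rewrite mulf_eq0 expf_eq0 (negbTE y0_neq0) andbF /= => /eqP.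
- by move=> j; have := hci j; rewrite ptildeE // pmulr_rge0 // exprn_gt0.
Qed.

Lemma closure_witness (v : 'I_n -> R) (vt d : R) :
  vt < 0 -> 0 < d -> in_closure_K1tilde_pos f ce ci 0 v vt ->
  exists y0 (y : 'I_n -> R) s,
    [/\ inK1tilde f ce ci y0 y s, 0 < y0, y0 < d & s < vt / 2].
Proof.
move=> vt_lt0 d_gt0 hcl.
have half_gt0 : 0 < - (vt / 2) by lra.
have e_gt0 : 0 < Num.min ((vt / 2) ^+ 2) (d ^+ 2).
  by rewrite lt_min -sqrrN !exprn_gt0.
have [y0 [y [s [hK y0_gt0 close]]]] := hcl _ e_gt0.
have close_l := lt_le_trans close (min_le_l _ _).
have close_r := lt_le_trans close (min_le_r _ _).
have dist_ge0 := sqnorm_ge0 (fun i => y i - v i).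
rewrite subr0 in close_l close_r.
have y0_sq : y0 ^+ 2 < d ^+ 2.
  by move: (sqr_ge0 (s - vt)) close_r; lra.
have s_sq : (s - vt) ^+ 2 < (vt / 2) ^+ 2.
  by move: (sqr_ge0 y0) close_l; lra.
exists y0, y, s; split => //; first exact: lt_of_sqr_lt (ltW d_gt0) y0_sq.
have : s - vt < - (vt / 2).
  by apply: lt_of_sqr_lt; rewrite ?sqrrN ?ltW.
by lra.
Qed.

Lemma K1_unbounded {v : 'I_n -> R} {vt : R} :
  vt < 0 -> in_closure_K1tilde_pos f ce ci 0 v vt ->
  forall M : R, exists (x : 'I_n -> R) (t : R), inK1 f ce ci x t /\ t < M.
Proof.
move=> vt_lt0 hcl M.
set B := `|M| + 1.
have B_gt0 : 0 < B by rewrite ltr_wpDl.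
have d_gt0 : 0 < - vt / (2 * B) by rewrite divr_gt0 ?oppr_gt0 // mulr_gt0.
have [y0 [y [s [hK y0_gt0 y0_small s_neg]]]] :=
  closure_witness v vt _ vt_lt0 d_gt0 hcl.
exists (fun i => y i / y0), (s / y0); split; first exact: K1tilde_to_K1.
have Bd : B * (- vt / (2 * B)) = - vt / 2.
  by field; rewrite gt_eqF.
have M_ge : - B < M by move: (ler_norm (- M)); rewrite normrN /B; lra.
rewrite ltr_pdivrMr //.
have : B * y0 < B * (- vt / (2 * B)) by rewrite ltr_pM2l.
rewrite Bd => By0.
have : - B * y0 < M * y0 by rewrite ltr_pM2r.
by move: s_neg By0; lra.
Qed.

(* On K_1, if x_{n+1} <= -1 then every objective of positive degree is at
   most x_{n+1}, since f_i(x) <= -(-x_{n+1})^(d_i) <= x_{n+1}. *)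
Lemma K1_objectives_le (x : 'I_n -> R) (t : R) :
  (forall i, (1 <= pdeg (f i))%N) -> inK1 f ce ci x t -> t <= -1 ->
  forall i, (f i).@[x] <= t.
Proof.
move=> hdeg [hf _] t_le i.
have pow_ge : - t <= (- t) ^+ pdeg (f i).
  by rewrite -{1}[- t]expr1 ler_eXnr // lerNr.
move: (hf i) pow_ge; rewrite subr_ge0.
by move: ((- t) ^+ _) ((f i).@[x]) => T F; lra.
Qed.

Lemma minmax_unbounded :
  (forall i, (1 <= pdeg (f i))%N) ->
  (forall M : R, exists (x : 'I_n -> R) (t : R), inK1 f ce ci x t /\ t < M) ->
  forall M : R, exists x : 'I_n -> R, inK ce ci x /\ forall i, (f i).@[x] < M.
Proof.
move=> hdeg unbK1 M.
have [x [t [hK1 t_lt]]] := unbK1 (Num.min M (-1)).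
exists x; split; first by case: hK1.
have t_le : t <= -1 by apply/ltW/(lt_le_trans t_lt)/min_le_r.
move=> i; apply: le_lt_trans (K1_objectives_le _ _ hdeg hK1 t_le i) _.
exact: lt_le_trans t_lt (min_le_l _ _).
Qed.

Lemma no_weakly_pareto :
  (forall M : R, exists x : 'I_n -> R, inK ce ci x /\ forall i, (f i).@[x] < M) ->
  forall xs : 'I_n -> R, ~ weakly_pareto f ce ci xs.
Proof.
move=> unb xs [_ not_dominated]; apply: not_dominated.
have [x [hK hx]] := unb (- \sum_i `|(f i).@[xs]|).
exists x; split => // i.
apply: lt_le_trans (hx i) _.
have le_sum : `|(f i).@[xs]| <= \sum_i `|(f i).@[xs]|.
  by rewrite (bigD1 i) //= lerDl; apply: sumr_ge0.
rewrite lerNl; apply: le_trans le_sum.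
by rewrite -normrN ler_norm.
Qed.

End Unboundedness.

Theorem theorem7p3 (R : realType) (n m pe pi : nat)
  (f : 'I_m -> {mpoly R[n]}) (ce : 'I_pe -> {mpoly R[n]})
  (ci : 'I_pi -> {mpoly R[n]})
  (hdeg : forall i, (1 <= pdeg (f i))%N)
  (lam : R) (v : 'I_n -> R) (vt : R)
  (hlam : 0 < lam)
  (hv : inK1circ f ce ci v vt)
  (hlv : lam * vt = -1)
  (hcl : in_closure_K1tilde_pos f ce ci 0 v vt) :
  [/\ (forall M : R, exists (x : 'I_n -> R) (t : R), inK1 f ce ci x t /\ t < M),
      (forall M : R, exists x : 'I_n -> R,
          inK ce ci x /\ forall i, (f i).@[x] < M)
    & forall xs : 'I_n -> R, ~ weakly_pareto f ce ci xs].
Proof.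
have vt_lt0 : vt < 0.
  by rewrite -(pmulr_rlt0 _ hlam) hlv ltrN10.
have unbK1 := K1_unbounded vt_lt0 hcl.
have unbK := minmax_unbounded hdeg unbK1.
by split => //; apply: no_weakly_pareto.
Qed.
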